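(* Let $u$ be any element of $W=S_n$ and let $U=[e,u]_R$. Then the multiplication map $W/U\times U\to W$, $(x,y)\mapsto xy$, is surjective.
   Context: $S_n$ is the symmetric group with product $(uv)(i)=u(v(i))$, generated by adjacent transpositions. The length $\ell(w)$ is the number of inversions $\{(i,j): i<j,\ w(i)>w(j)\}$. Right weak order: $v\leq_R w$ iff $w=vz$ with $\ell(w)=\ell(v)+\ell(z)$; $[e,u]_R=\{v:v\leq_R u\}$. For $U\subseteq W$, $W/U=\{w\in W:\ell(wu)=\ell(w)+\ell(u)\ \forall u\in U\}$. *)

From mathcomp Require Import all_boot all_fingroup.
Set Implicit Arguments. Unset Strict Implicit. Unset Printing Implicit Defensive.

(* S_n = 'S_n (permutations of 'I_n = {0,...,n-1}).
   Paper product: (u v)(i) = u (v i).  MathComp's (u * v) is i |-> v (u i),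
   so we define the paper's product explicitly. *)
Definition pmul n (u v : 'S_n) : 'S_n := (v * u)%g.

Definition plength n (w : 'S_n) : nat :=
  #|[set p : 'I_n * 'I_n | (p.1 < p.2)%N && (w p.2 < w p.1)%N]|.

Definition weakR n (v w : 'S_n) : Prop :=
  exists z : 'S_n, w = pmul v z /\ plength w = (plength v + plength z)%N.

Definition weak_interval n (u : 'S_n) : 'S_n -> Prop := fun v => weakR v u.

Definition left_quot n (U : 'S_n -> Prop) : 'S_n -> Prop :=
  fun w => forall x, U x -> plength (pmul w x) = (plength w + plength x)%N.

From mathcomp Require Import all_boot all_fingroup zify.

Set Implicit Arguments. Unset Strict Implicit. Unset Printing Implicit Defensive.

(* Write a <= g for inv_set a \subset inv_set g; then g = (g a^-1) a with
   l(g) = l(g a^-1) + l(a).  Among the m with l(w m) = l(w) + l(m) and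
   u <= w m (m = w^-1 w0, for the longest element w0, is one), pick m of minimal
   length.  Splitting off an adjacent descent s of m and replacing u by u s, an
   induction on l(m) shows m <= u.  Then x = w m u^-1 and y = u m^-1 give
   w = x y, y m = u with l(u) = l(y) + l(m), and l(x u) = l(x) + l(u); by
   subadditivity of l the latter forces l(x v) = l(x) + l(v) whenever
   u = v z with l(u) = l(v) + l(z). *)

Lemma card_addb (T : finType) (A B C : {set T}) :
  (forall x, (x \in C) = (x \in A) (+) (x \in B)) ->
  #|C| + (#|A :&: B|).*2 = #|A| + #|B|.
Proof.
move=> CE; have -> : C = (A :|: B) :\: (A :&: B).
  by apply/setP => x; rewrite CE !inE; case: (x \in A); case: (x \in B).
have sIU := subset_trans (subsetIl A B) (subsetUl A B).
rewrite cardsDS //; have := cardsUI A B; have := subset_leq_card sIU; lia.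
Qed.

Section Inversions.

Variable n : nat.
Implicit Types (a b g m u w z : 'S_n) (p : 'I_n * 'I_n).

Lemma pmulE a b i : pmul a b i = a (b i).
Proof. by rewrite /pmul permM. Qed.

Lemma pmulA a b z : pmul a (pmul b z) = pmul (pmul a b) z.
Proof. by rewrite /pmul mulgA. Qed.

Definition inv_set a := [set p : 'I_n * 'I_n | (p.1 < p.2) && (a p.2 < a p.1)].

Lemma plengthE a : plength a = #|inv_set a|.
Proof. by []. Qed.

Lemma perm_val_eq a (i j : 'I_n) : (a i == a j :> nat) = (i == j :> nat).
Proof. by rewrite !(inj_eq val_inj) (inj_eq perm_inj). Qed.

(* Counting both orders of each pair turns the inversions of a product into a
   symmetric difference, see [rev_pairsM]. *)
Definition rev_pairs a := [set p : 'I_n * 'I_n | (p.1 < p.2) != (a p.1 < a p.2)].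

Lemma rev_pairsE a :
  rev_pairs a = inv_set a :|: (fun p => (p.2, p.1)) @^-1: inv_set a.
Proof.
apply/setP => -[i j]; rewrite !inE /=.
have := perm_val_eq a i j.
by case: (ltngtP i j); case: (ltngtP (a i) (a j)) => //=; lia.
Qed.

Lemma card_rev_pairs a : #|rev_pairs a| = (plength a).*2.
Proof.
have swap_inj : injective (fun p : 'I_n * 'I_n => (p.2, p.1)).
  by move=> [? ?] [? ?] [-> ->].
rewrite rev_pairsE cardsU card_preimset // -addnn.
suff -> : inv_set a :&: (fun p => (p.2, p.1)) @^-1: inv_set a = set0.
  by rewrite cards0 subn0.
apply/setP => -[i j]; rewrite !inE /=.
by apply/negP => /andP[/andP[+ _] /andP[+ _]]; lia.
Qed.

Lemma rev_pairsM z a p :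
  (p \in rev_pairs (pmul z a)) =
  (p \in rev_pairs a) (+) (p \in (fun p => (a p.1, a p.2)) @^-1: rev_pairs z).
Proof.
rewrite !inE /= !pmulE.
by case: (_ < _)%N; case: (a _ < a _)%N; case: (z _ < z _)%N.
Qed.

Lemma pair_perm_inj a : injective (fun p : 'I_n * 'I_n => (a p.1, a p.2)).
Proof. by move=> [i j] [i' j'] /= [/perm_inj-> /perm_inj->]. Qed.

Lemma plengthM_le z a : plength (pmul z a) <= plength z + plength a.
Proof.
have := card_addb (rev_pairsM z a).
rewrite card_preimset ?card_rev_pairs; [lia | exact: pair_perm_inj].
Qed.

Lemma rev_pairsS a g : inv_set a \subset inv_set g -> rev_pairs a \subset rev_pairs g.
Proof. by move=> sub; rewrite !rev_pairsE setUSS // preimsetS. Qed.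

Lemma plengthM_add z a : inv_set a \subset inv_set (pmul z a) ->
  plength (pmul z a) = plength z + plength a.
Proof.
move=> /rev_pairsS sub; have := card_addb (rev_pairsM z a).
set P := _ @^-1: _; have -> : rev_pairs a :&: P = set0.
  apply/setP => p; rewrite inE in_set0; apply/negP => /andP[pa pP].
  by have := subsetP sub p pa; rewrite rev_pairsM pa pP.
rewrite /P card_preimset ?card_rev_pairs ?cards0; [lia | exact: pair_perm_inj].
Qed.

Lemma exists_adjacent_descent a : inv_set a != set0 ->
  exists k k' : 'I_n, k' = k.+1 :> nat /\ (k, k') \in inv_set a.
Proof.
move=> /set0Pn[[i j]]; rewrite inE /= => /andP[lt_ij a_ji].
case: (pickP [pred p : 'I_n * 'I_n | (p.2 == p.1.+1 :> nat) && (p \in inv_set a)]).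
  by move=> [k k'] /andP[/eqP ? ?]; exists k, k'.
move=> no_desc; pose f x := val (a (insubd i x)).
have f_incr : {in [pred x | x < n] &, {homo f : x y / x < y}}.
  apply: homo_ltn_in => [x y z|x y _ yn z /andP[_ zy]|x xn x1n]; first exact: ltn_trans.
    exact: ltn_trans zy yn.
  have := no_desc (insubd i x, insubd i x.+1); rewrite /= !inE /f /= !insubdK //.
  rewrite eqxx ltnSn /= => /negbT; rewrite -leqNgt leq_eqVlt perm_val_eq !insubdK //.
  by rewrite (ltn_eqF (ltnSn x)).
have := f_incr i j (ltn_ord i) (ltn_ord j) lt_ij.
by rewrite /f !valKd ltnNge (ltnW a_ji).
Qed.

Lemma ord_neq (i j : 'I_n) : i <> j -> i <> j :> nat.
Proof. by move=> ne /val_inj. Qed.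

Lemma tpermE (i j l : 'I_n) :
  tperm i j l = (if l == i :> nat then j else if l == j :> nat then i else l) :> nat.
Proof.
rewrite !val_eqE; case: tpermP => [->|->|/eqP/negbTE-> /eqP/negbTE->] //.
  by rewrite eqxx.
by case: eqP => [->|]; rewrite ?eqxx.
Qed.

Lemma pmul_tpermK (i j : 'I_n) a : pmul (pmul a (tperm i j)) (tperm i j) = a.
Proof. by rewrite -pmulA /pmul tperm2 mul1g. Qed.

Section Adjacent.

Variables k k' : 'I_n.
Hypothesis kk' : k' = k.+1 :> nat.
Let s := tperm k k'.

Lemma tperm_adj_lt (i j : 'I_n) : i < j -> (i, j) != (k, k') -> s i < s j.
Proof. rewrite xpair_eqE -!val_eqE /= !tpermE; do !case: eqP; lia. Qed.

Lemma inv_set_tperm : inv_set s = [set (k, k')].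
Proof.
apply/setP => -[i j]; rewrite !inE /= xpair_eqE -!val_eqE /= !tpermE.
by do !case: eqP; lia.
Qed.

Lemma plength_tperm : plength s = 1.
Proof. by rewrite plengthE inv_set_tperm cards1. Qed.

Lemma desc_mul_tperm a :
  ((k, k') \in inv_set (pmul a s)) = ((k, k') \notin inv_set a).
Proof.
rewrite !inE /= !pmulE /s tpermL tpermR kk' ltnSn /=.
have := perm_val_eq a k k'; rewrite kk'; lia.
Qed.

Lemma plengthM_tperm_le a : plength (pmul a s) <= (plength a).+1.
Proof. by have := plengthM_le a s; rewrite plength_tperm addn1. Qed.

Lemma plengthM_tperm_lt a : (k, k') \in inv_set a -> plength (pmul a s) < plength a.
Proof.
move=> desc; have := @plengthM_add (pmul a s) s.
by rewrite pmul_tpermK inv_set_tperm sub1set plength_tperm addn1 => ->.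
Qed.

Lemma inv_setS_tperm a b :
  inv_set a \subset inv_set b ->
  ((k, k') \in inv_set a) = ((k, k') \in inv_set b) ->
  inv_set (pmul a s) \subset inv_set (pmul b s).
Proof.
move=> sub desc_ab; apply/subsetP => -[i j].
have [[-> ->]|ne] := eqVneq (i, j) (k, k'); first by rewrite !desc_mul_tperm desc_ab.
rewrite !inE /= !pmulE => /andP[lt_ij ba]; rewrite lt_ij.
have := subsetP sub (s i, s j); rewrite !inE /= tperm_adj_lt // ba.
by move=> /(_ isT) /andP[].
Qed.

Lemma inv_set_sub_tpermr a g :
  inv_set a \subset inv_set g -> (k, k') \in inv_set g -> (k, k') \notin inv_set a ->
  inv_set a \subset inv_set (pmul g s).
Proof.
move=> sub desc_g asc_a.
have sub' (i j : 'I_n) : i < j -> a j < a i -> g j < g i.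
  move=> lt_ij a_ji; have := subsetP sub (i, j); rewrite !inE /= lt_ij a_ji.
  by move=> /(_ isT).
move: desc_g asc_a; rewrite !inE /= kk' ltnSn /= => g_k a_k.
have a_ne := perm_val_eq a k k'.
(* A pair meeting {k, k'} in one point is handled by transitivity of the order
   along [a] or along [g]. *)
apply/subsetP => -[i j]; rewrite !inE /= !pmulE.
move: (sub' i j) (sub' k' j) (sub' i k) g_k a_k a_ne.
by case: tpermP => [->|->|/ord_neq ? /ord_neq ?];
  case: tpermP => [->|->|/ord_neq ? /ord_neq ?]; lia.
Qed.

Lemma inv_set_tpermr_sub a g :
  inv_set a \subset inv_set g -> (k, k') \in inv_set g -> (k, k') \notin inv_set a ->
  inv_set (pmul a s) \subset inv_set g.
Proof.
move=> sub desc_g asc_a; rewrite -(pmul_tpermK k k' g).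
apply: inv_setS_tperm; first exact: inv_set_sub_tpermr.
by rewrite desc_mul_tperm desc_g (negbTE asc_a).
Qed.

End Adjacent.

Section MinimalFactor.

Variable w : 'S_n.

Definition admissible u m :=
  (inv_set m \subset inv_set (pmul w m)) && (inv_set u \subset inv_set (pmul w m)).

Lemma admissible_min_subset u m :
  admissible u m -> (forall m', admissible u m' -> plength m <= plength m') ->
  inv_set m \subset inv_set u.
Proof.
have [N] := ubnP (plength m); elim: N u m => // N IH u m lt_mN.
move=> /andP[m_wm u_wm] m_min.
have [-> | /exists_adjacent_descent[k [k' [kk' m_k]]]] := eqVneq (inv_set m) set0.
  exact: sub0set.
set s := tperm k k'.
have wm_k : (k, k') \in inv_set (pmul w m) := subsetP m_wm _ m_k.
have ms_short : plength (pmul m s) < plength m := plengthM_tperm_lt kk' m_k.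
have ms_wms : inv_set (pmul m s) \subset inv_set (pmul w (pmul m s)).
  by rewrite pmulA; apply: inv_setS_tperm => //; rewrite m_k wm_k.
have u_k : (k, k') \in inv_set u.
  apply/negPn/negP => u_nk.
  have : admissible u (pmul m s) by rewrite /admissible ms_wms pmulA inv_set_sub_tpermr.
  by move/m_min; rewrite leqNgt ms_short.
have us_asc : (k, k') \notin inv_set (pmul u s) by rewrite (desc_mul_tperm kk') u_k.
(* A competitor for [u s] shorter than [m s] would yield one for [u] shorter
   than [m]. *)
have ms_min m' : admissible (pmul u s) m' -> plength (pmul m s) <= plength m'.
  move=> /andP[m'_wm' us_wm']; rewrite leqNgt; apply/negP => lt_m'.
  have [wm'_k | wm'_nk] := boolP ((k, k') \in inv_set (pmul w m')).
    have : admissible u m'.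
      by rewrite /admissible m'_wm' -(pmul_tpermK k k' u) inv_set_tpermr_sub.
    by move/m_min; lia.
  have m'_nk : (k, k') \notin inv_set m' by apply: contra wm'_nk; apply: subsetP.
  have : admissible u (pmul m' s).
    rewrite /admissible !pmulA -(pmul_tpermK k k' u).
    apply/andP; split; apply: inv_setS_tperm => //.
      by rewrite (negbTE wm'_nk) (negbTE m'_nk).
    by rewrite (negbTE wm'_nk) (negbTE us_asc).
  have : plength (pmul m' s) <= (plength m').+1 := plengthM_tperm_le kk' m'.
  by move=> ? /m_min; lia.
have ms_us : inv_set (pmul m s) \subset inv_set (pmul u s).
  apply: IH ms_min; first lia.
  rewrite /admissible ms_wms pmulA.
  by apply: inv_setS_tperm => //; rewrite u_k wm_k.
rewrite -(pmul_tpermK k k' m) -(pmul_tpermK k k' u).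
by apply: inv_setS_tperm => //; rewrite !(desc_mul_tperm kk') m_k u_k.
Qed.

End MinimalFactor.

Lemma inv_set_sub_rev_ord a : inv_set a \subset inv_set (perm (@rev_ord_inj n)).
Proof.
apply/subsetP => -[i j]; rewrite !inE /= !permE /= => /andP[lt_ij _].
by rewrite lt_ij; have := ltn_ord i; have := ltn_ord j; lia.
Qed.

Lemma left_quot_weak_interval x u :
  plength (pmul x u) = plength x + plength u -> left_quot (weak_interval u) x.
Proof.
move=> xu v [z [uvz luvz]]; subst u; rewrite pmulA in xu.
have := plengthM_le (pmul x v) z; have := plengthM_le x v; lia.
Qed.

End Inversions.

Theorem theorem4p5 (n : nat) (u : 'S_n) :
  forall w : 'S_n, exists (x y : 'S_n),
    left_quot (weak_interval u) x /\ weak_interval u y /\ w = pmul x y.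
Proof.
move=> w.
have w0_adm : admissible w u (pmul w^-1 (perm (@rev_ord_inj n))).
  by rewrite /admissible /pmul mulgKV !inv_set_sub_rev_ord.
case: (arg_minnP (@plength n) w0_adm) => m m_adm m_min.
have m_u := admissible_min_subset m_adm m_min.
case/andP: m_adm => _ u_wm.
exists (pmul (pmul w m) u^-1), (pmul u m^-1); split; [|split].
- apply: left_quot_weak_interval; apply: plengthM_add.
  by rewrite /pmul mulKVg.
- exists m; rewrite /pmul mulKVg; split=> //.
  by rewrite -{1}(mulKVg m u); apply: plengthM_add; rewrite /pmul mulKVg.
- by rewrite /pmul mulgA mulgK mulKg.
Qed.
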